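(* Let $q>3$ be an odd prime power, let $f(x)=x^2$ on $\mathbb F_{q^2}$, and let $\theta\in\mathbb F_{q^2}^*$ be such that $\theta^{q+1}$ is a nonsquare in $\mathbb F_q$. Then in the unital $\mathcal U_\theta:=\{(x,t\theta):x\in\mathbb F_{q^2},t\in\mathbb F_q\}\cup\{(\infty)\}$ of $\Pi(f)$, the point $(\infty)$ is the unique vertex of Wilbrink's condition II in strong form.
   Context: $\Pi(f)$ for $f(x)=x^2$ is the projective plane with points $(x,y)\in\mathbb F_{q^2}^2$ and $(a)$ for $a\in\mathbb F_{q^2}\cup\{\infty\}$, lines $L_{a,b}=\{(x,f(x+a)-b):x\in\mathbb F_{q^2}\}\cup\{(a)\}$, $N_a=\{(a,y):y\in\mathbb F_{q^2}\}\cup\{(\infty)\}$ ($a,b\in\mathbb F_{q^2}$), $L_\infty=\{(a):a\in\mathbb F_{q^2}\cup\{\infty\}\}$. A unital (set of $q^3+1$ points meeting every line in $1$ or $q+1$ points) is regarded as a design whose blocks are its intersections with lines meeting it in $q+1$ points. A point $v$ of the unital is a vertex of Wilbrink's condition II in strong form if for every block $B$ with $v\notin B$, every block $C$ with $v\in C$ meeting $B$, and every point $w\in C$ distinct from $v$ and from the point of $B\cap C$, there exists a block $B'\neq C$ with $w\in B'$ such that $B'$ meets every block that contains $v$ and meets $B$. *)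

From HB Require Import structures.
From mathcomp Require Import all_boot all_order all_algebra all_field.
Set Implicit Arguments. Unset Strict Implicit. Unset Printing Implicit Defensive.
Import GRing.Theory.
Local Open Scope ring_scope.

Section Plane.
Variable F : finFieldType.

(* Points of Pi(f): affine points (x,y) = inl (x,y); (a) = inr (Some a);
   (infinity) = inr None. *)
Definition point := ((F * F) + option F)%type.

(* Lines: L_{a,b} = inl (inl (a,b)); N_a = inl (inr a); L_infinity = inr tt. *)
Definition line := ((F * F + F) + unit)%type.

Definition aff (x y : F) : point := inl (x, y).
Definition pinf (a : option F) : point := inr a.

Definition incident (f : F -> F) (l : line) (p : point) : bool :=
  match l, p with
  | inl (inl (a, b)), inl (x, y) => y == f (x + a) - b
  | inl (inl (a, b)), inr (Some a') => a' == a
  | inl (inl _), inr None => false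
  | inl (inr a), inl (x, _) => x == a
  | inl (inr _), inr (Some _) => false
  | inl (inr _), inr None => true
  | inr _, inl _ => false
  | inr _, inr _ => true
  end.

Definition pts (f : F -> F) (l : line) : {set point} :=
  [set p | incident f l p].

Definition is_block (f : F -> F) (q : nat) (U : {set point}) (B : {set point}) :=
  exists l : line, B = U :&: pts f l /\ #|U :&: pts f l| = q.+1.

Definition meets (B C : {set point}) : Prop := B :&: C != set0.

Definition strong_II_vertex (f : F -> F) (q : nat) (U : {set point})
    (v : point) : Prop :=
  v \in U /\
  forall B C : {set point},
    is_block f q U B -> v \notin B ->
    is_block f q U C -> v \in C -> meets B C ->
    forall w : point, w \in C -> w != v -> w \notin B :&: C ->
    exists B' : {set point},
      [/\ is_block f q U B', B' != C, w \in B' &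
        forall D : {set point}, is_block f q U D -> v \in D -> meets D B ->
          meets B' D].

Definition U_theta (q : nat) (theta : F) : {set point} :=
  [set p : point | match p with
     | inl (x, y) => [exists t : F, (t ^+ q == t) && (y == t * theta)]
     | inr None => true
     | inr (Some _) => false
     end].

End Plane.

Definition prime_power (q : nat) : Prop :=
  exists p k : nat, [/\ prime p, (0 < k)%N & q = (p ^ k)%N].

From HB Require Import structures.
From mathcomp Require Import all_boot all_order all_algebra all_field.
From mathcomp Require Import ring zify.
Set Implicit Arguments. Unset Strict Implicit. Unset Printing Implicit Defensive.
Import GRing.Theory.
Local Open Scope ring_scope.

(* Blocks through (infinity) are the vertical
   lines N_c, the other blocks are parabolas, and shifting a parabola vertically
   by an element of F_q theta gives a block meeting the same N_c: hence
   (infinity) is a vertex.  At an affine point v = (c, y), take B the parabola of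
   slope 2 through (c, y + theta), C = N_c and w = (infinity); then B' = N_d with
   d <> c must meet each parabola through v of slope 2 + theta/u with
   u^2 + 2u in F_q theta, since these meet B.  For u = -2 and
   u = 2(1 +- theta)/(theta^(q+1) - 1) this puts rho^q / rho in F_q, where
   rho = (1 + theta)(1 - theta^q), so rho^q = +-rho, which contradicts
   theta \notin F_q and theta^(q+1) <> 1.  Block sizes all come from one count:
   for m <> 0 the conic u^2 + m u in F_q theta has q + 1 points, one on each
   F_q-line through 0 other than F_q theta / m. *)

Lemma card_roots_lt_size (F : finFieldType) (p : {poly F}) (A : {pred F}) :
  p != 0 -> {in A, forall x, root p x} -> (#|A| < size p)%N.
Proof.
move=> p_neq0 rootA; rewrite cardE max_poly_roots ?enum_uniq //.
by apply/allP => x; rewrite mem_enum; apply: rootA.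
Qed.

Section FrobeniusFixedField.
Variables (F : finFieldType) (q : nat).
Hypotheses (q_pp : prime_power q) (cardF : #|F| = (q ^ 2)%N).

Lemma pchar_nat_q : [pchar F].-nat q.
Proof.
case: q_pp => p [k [p_pr k_gt0 q_def]].
have pF : p \in [pchar F].
  by rewrite (@card_finPcharP F p (k * 2)) // cardF q_def expnM.
by rewrite q_def (eq_pnat _ (pcharf_eq pF)) pnatX pnat_id.
Qed.

Lemma q_gt1 : (1 < q)%N.
Proof.
by case: q_pp => p [k [p_pr k_gt0 ->]]; rewrite -(expn0 p) ltn_exp2l ?prime_gt1.
Qed.

Lemma exprqD (x y : F) : (x + y) ^+ q = x ^+ q + y ^+ q.
Proof. exact: exprDn_pchar pchar_nat_q. Qed.

Lemma exprqN (x : F) : (- x) ^+ q = - x ^+ q.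
Proof. exact: exprNn_pchar pchar_nat_q. Qed.

Lemma exprqB (x y : F) : (x - y) ^+ q = x ^+ q - y ^+ q.
Proof. by rewrite exprqD exprqN. Qed.

Lemma exprqK (x : F) : (x ^+ q) ^+ q = x.
Proof. by rewrite -exprM mulnn -cardF expf_card. Qed.

Definition fixq_subdef : pred F := fun x => x ^+ q == x.
Definition fixq : qualifier 1 F := [qualify a x | fixq_subdef x].

Lemma fixqE x : (x \is a fixq) = (x ^+ q == x). Proof. by []. Qed.

Lemma fixq_divring_closed : divring_closed fixq.
Proof.
split=> [|x y|x y]; rewrite !fixqE.
- by rewrite expr1n.
- by rewrite exprqB => /eqP-> /eqP->.
- by rewrite exprMn exprVn => /eqP-> /eqP->.
Qed.

HB.instance Definition _ :=
  GRing.isDivringClosed.Build F fixq_subdef fixq_divring_closed.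

Lemma fixq_norm x : x ^+ q.+1 \is a fixq.
Proof. by rewrite fixqE -exprM mulnC exprM exprS exprqK -exprSr. Qed.

Lemma fixq_div_anti a b : a ^+ q = - a -> b ^+ q = - b -> a / b \is a fixq.
Proof. by move=> aq bq; rewrite fixqE exprMn exprVn aq bq invrN mulrNN. Qed.

Lemma fixq_conj_ratio x : x != 0 -> x ^+ q / x \is a fixq ->
  x ^+ q = x \/ x ^+ q = - x.
Proof.
move=> x_neq0; rewrite fixqE exprMn exprVn exprqK => /eqP ratio_fixed.
have : (x ^+ q / x) ^+ 2 == 1.
  by rewrite expr2 -{2}ratio_fixed mulrA divfK // divff ?expf_neq0.
rewrite sqrf_eq1 => /orP[] /eqP ratio; [left | right].
  by rewrite -[RHS]mul1r -ratio divfK.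
by rewrite -mulN1r -ratio divfK.
Qed.

Lemma card_fixq : #|[set x : F | x \is a fixq]| = q.
Proof.
set Q := [set x : F | x \is a fixq]; set Q' := Q :\ 0.
have q_gt0 : (0 < q)%N by apply: ltnW q_gt1.
have q1_gt0 : (0 < q.-1)%N by rewrite -ltnS prednK ?q_gt1.
suff cardQ' : #|Q'| = q.-1.
  by rewrite (cardsD1 0) inE rpred0 cardQ' add1n prednK.
apply/eqP; rewrite eqn_leq; apply/andP; split.
  rewrite -ltnS -(size_XnsubC (1 : F) q1_gt0).
  apply: card_roots_lt_size => [|x]; first by rewrite -size_poly_eq0 size_XnsubC.
  rewrite !inE fixqE => /andP[x_neq0 /eqP xq].
  rewrite rootE !hornerE subr_eq0; apply/eqP; apply: (mulIf x_neq0).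
  by rewrite mul1r -exprSr prednK.
have fiber_le j : (#|[set x : F | x ^+ q.+1 == j]| <= q.+1)%N.
  rewrite -ltnS -(size_XnsubC j (ltn0Sn q)).
  apply: card_roots_lt_size => [|x]; first by rewrite -size_poly_eq0 size_XnsubC.
  by rewrite inE rootE !hornerE => /eqP->; rewrite subrr.
(* The norm x ^+ q.+1 maps the q^2 - 1 units into Q' with fibres of size
   at most q + 1. *)
have : (#|[set~ 0%R : F]| <= #|Q'| * q.+1)%N.
  rewrite -sum1_card (partition_big (fun x => x ^+ q.+1) (mem Q')) /=; last first.
    by move=> x; rewrite !inE => x_neq0; rewrite expf_neq0 //=; apply: fixq_norm.
  rewrite -sum_nat_const leq_sum // => j _; rewrite sum1dep_card.
  apply: leq_trans (fiber_le j); apply: subset_leq_card.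
  by apply/subsetP => x; rewrite !inE => /andP[].
rewrite cardsC1 cardF; nia.
Qed.

Section ThetaLine.
Variable theta : F.
Hypotheses (theta_neq0 : theta != 0)
  (theta_nonsquare : ~ (exists s : F, s ^+ q = s /\ s ^+ 2 = theta ^+ q.+1)).

Lemma theta_notin_fixq : theta \isn't a fixq.
Proof.
rewrite fixqE; apply/eqP => thq; apply: theta_nonsquare.
by exists theta; split; rewrite // [RHS]exprS thq expr2.
Qed.

Lemma theta_neq_fixq a : a \is a fixq -> theta != a.
Proof. by move=> aq; apply: contraNneq theta_notin_fixq => ->. Qed.

Lemma thetaq_neq_fixq a : a \is a fixq -> theta ^+ q != a.
Proof.
move=> aq; apply: contraNneq (theta_neq_fixq aq) => thq.
by rewrite -[theta]exprqK thq.
Qed.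

Lemma norm_theta_sub1_neq0 : theta ^+ q.+1 - 1 != 0.
Proof.
rewrite subr_eq0; apply/eqP => N1; apply: theta_nonsquare.
by exists 1; rewrite N1 !expr1n.
Qed.

Lemma one_sub_thetaq_neq0 : 1 - theta ^+ q != 0.
Proof. by rewrite subr_eq0 eq_sym thetaq_neq_fixq ?rpred1. Qed.

Definition axis : {pred F} := [pred y | y / theta \is a fixq].

Lemma axis_zmod_closed : zmod_closed axis.
Proof. by split=> [|x y]; rewrite !inE ?mul0r ?rpred0 // mulrBl; apply: rpredB. Qed.

HB.instance Definition _ := GRing.isZmodClosed.Build F axis axis_zmod_closed.

Lemma axisP y : reflect (exists2 t, t \is a fixq & y = t * theta) (y \in axis).
Proof.
apply: (iffP idP) => [ya | [t tq ->]]; last by rewrite inE mulfK.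
by exists (y / theta); rewrite ?divfK.
Qed.

Lemma theta_in_axis : theta \in axis.
Proof. by apply/axisP; exists 1; rewrite ?rpred1 ?mul1r. Qed.

Lemma fixq_axis_eq0 a : a \is a fixq -> a \in axis -> a = 0.
Proof.
move=> aq /axisP[t tq a_def]; have [t0 | t_neq0] := eqVneq t 0.
  by rewrite a_def t0 mul0r.
case/negP: theta_notin_fixq; have -> : theta = a / t by rewrite a_def mulrC mulKf.
exact: rpred_div.
Qed.

Lemma fixq_theta_indep a b : a \is a fixq -> b \is a fixq -> a + b * theta = 0 -> a = 0.
Proof.
move=> aq bq /eqP; rewrite addr_eq0 => /eqP a_def; apply: fixq_axis_eq0 aq _.
by rewrite a_def rpredN; apply/axisP; exists b.
Qed.

Lemma one_add_theta_neq0 eps : eps \is a fixq -> 1 + eps * theta != 0.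
Proof. by move=> epsq; apply/eqP => /(fixq_theta_indep (rpred1 _) epsq)/eqP; rewrite oner_eq0. Qed.

Lemma sqr_axis_eq0 x : x ^+ 2 \in axis -> x = 0.
Proof.
case/axisP => l lq x2; apply/eqP/negPn/negP => x_neq0.
have l_neq0 : l != 0.
  by apply: contraNneq x_neq0 => l0; move/eqP: x2; rewrite l0 mul0r expf_eq0.
have ll : l ^+ q.+1 = l ^+ 2 by rewrite exprS (eqP lq) expr2.
apply: theta_nonsquare; exists (x ^+ q.+1 / l); split.
  by apply/eqP; rewrite -fixqE; apply: rpred_div => //; apply: fixq_norm.
rewrite expr_div_n -exprM mulnC exprM x2 exprMn ll mulrAC divff ?mul1r //.
by rewrite expf_neq0.
Qed.

(* As theta is not in F_q, F = F_q + F_q theta; [wedge] is F_q-linear with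
   kernel F_q theta, so [wedge z / wedge 1] is the coordinate of z along 1. *)
Definition wedge (z : F) := z * theta ^+ q - z ^+ q * theta.

Lemma wedge_is_zmod_morphism : zmod_morphism wedge.
Proof. by move=> x y; rewrite /wedge exprqB; ring. Qed.

HB.instance Definition _ :=
  GRing.isZmodMorphism.Build F F wedge wedge_is_zmod_morphism.

Lemma wedge_eq0 z : (wedge z == 0) = (z \in axis).
Proof.
by rewrite /wedge subr_eq0 inE fixqE exprMn exprVn eqr_div ?expf_neq0 // eq_sym.
Qed.

Lemma wedgeZ t z : t \is a fixq -> wedge (t * z) = t * wedge z.
Proof. by rewrite fixqE /wedge exprMn => /eqP->; ring. Qed.

Lemma wedge_anti z : wedge z ^+ q = - wedge z.
Proof. by rewrite /wedge exprqB !exprMn !exprqK; ring. Qed.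

Lemma wedge1_neq0 : wedge 1 != 0.
Proof. by rewrite wedge_eq0; apply/negP => /(fixq_axis_eq0 (rpred1 _))/eqP; rewrite oner_eq0. Qed.

Lemma wedge_sqr_neq0 z : z != 0 -> wedge (z ^+ 2) != 0.
Proof. by rewrite wedge_eq0; apply: contraNN => /sqr_axis_eq0->. Qed.

Definition conic (m : F) := [set u : F | u ^+ 2 + m * u \in axis].

Section Conic.
Variable m : F.
Hypothesis m_neq0 : m != 0.

Definition conic_dir t := (1 + t * theta) / m.
Definition conic_scale t := - (wedge 1 / wedge (conic_dir t ^+ 2)).
(* The F_q-line through 0 spanned by [conic_dir t] meets the conic again at
   [conic_point t]; these are all the points but 0. *)
Definition conic_point t := conic_scale t * conic_dir t.

Lemma conic_dir_neq0 t : t \is a fixq -> conic_dir t != 0.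
Proof.
move=> tq; rewrite mulf_neq0 ?invr_eq0 //; apply/eqP.
by move/(fixq_theta_indep (rpred1 _) tq)/eqP; rewrite oner_eq0.
Qed.

Lemma conic_scale_fixq t : conic_scale t \is a fixq.
Proof. by rewrite rpredN; apply: fixq_div_anti; apply: wedge_anti. Qed.

Lemma conic_scale_neq0 t : t \is a fixq -> conic_scale t != 0.
Proof.
move=> tq; rewrite oppr_eq0 mulf_neq0 ?invr_eq0 ?wedge1_neq0 //.
by rewrite wedge_sqr_neq0 ?conic_dir_neq0.
Qed.

Lemma wedge_conic_line a t : a \is a fixq -> t \is a fixq ->
  wedge ((a * conic_dir t) ^+ 2 + m * (a * conic_dir t)) =
  a * (a * wedge (conic_dir t ^+ 2) + wedge 1).
Proof.
move=> aq tq; have -> : (a * conic_dir t) ^+ 2 + m * (a * conic_dir t) =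
    (a * a) * conic_dir t ^+ 2 + a * 1 + (a * t) * theta.
  by rewrite /conic_dir; field.
rewrite !raddfD /= (wedgeZ _ (rpredM aq aq)) (wedgeZ _ aq) (wedgeZ _ (rpredM aq tq)).
by rewrite (_ : wedge theta = 0) ?mulr0 ?addr0 /wedge; ring.
Qed.

Lemma conic_point_in t : t \is a fixq -> conic_point t \in conic m.
Proof.
move=> tq; rewrite inE -wedge_eq0 wedge_conic_line ?conic_scale_fixq //.
by rewrite /conic_scale !mulNr divfK ?wedge_sqr_neq0 ?conic_dir_neq0 // addNr mulr0 oppr0.
Qed.

Lemma conic_point_inj : {in fixq &, injective conic_point}.
Proof.
move=> t1 t2 t1q t2q; rewrite /conic_point /conic_dir !mulrA => /(mulIf (invr_neq0 m_neq0)).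
set b1 := conic_scale t1; set b2 := conic_scale t2 => eq12.
have b1q := conic_scale_fixq t1; have b2q := conic_scale_fixq t2.
have b12 : b1 - b2 = 0.
  apply: (fixq_theta_indep (rpredB b1q b2q) (rpredB (rpredM b1q t1q) (rpredM b2q t2q))).
  have -> : b1 - b2 + (b1 * t1 - b2 * t2) * theta =
      b1 * (1 + t1 * theta) - b2 * (1 + t2 * theta) by ring.
  by rewrite eq12 subrr.
move: eq12; rewrite (subr0_eq b12) => /(mulfI (conic_scale_neq0 t2q)) /addrI.
by apply: mulIf.
Qed.

Lemma conic_point_surj x : x \in conic m -> x != 0 ->
  exists2 t, t \is a fixq & x = conic_point t.
Proof.
rewrite inE -wedge_eq0 => /eqP xc x_neq0.
set a := wedge (m * x) / wedge 1.
have aq : a \is a fixq by apply: fixq_div_anti; apply: wedge_anti.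
have a_neq0 : a != 0.
  rewrite mulf_neq0 ?invr_eq0 ?wedge1_neq0 //; apply/eqP => mx0.
  by move: xc; rewrite raddfD /= mx0 addr0; apply/eqP; rewrite wedge_sqr_neq0.
have : m * x / a - 1 \in axis.
  rewrite -wedge_eq0 raddfB /= mulrC wedgeZ ?rpredV // /a invf_div divfK ?subrr //.
  by apply: contraNneq a_neq0 => mx0; rewrite /a mx0 mul0r.
case/axisP => t tq /eqP; rewrite subr_eq => /eqP xt.
have x_def : x = a * conic_dir t.
  by rewrite /conic_dir addrC -xt; field; rewrite a_neq0 andbT.
exists t => //; rewrite x_def /conic_point; congr (_ * _).
move: xc; rewrite x_def wedge_conic_line // => /eqP; rewrite mulf_eq0 (negbTE a_neq0) /=.
rewrite addr_eq0 => /eqP a_eq; rewrite /conic_scale -mulNr -a_eq mulfK //.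
by rewrite wedge_sqr_neq0 ?conic_dir_neq0.
Qed.

Lemma card_conic : #|conic m| = q.+1.
Proof.
have -> : conic m = 0 |: [set conic_point t | t in fixq].
  apply/setP => x; rewrite in_setU1; apply/idP/idP => [xc | ].
    have [-> // | x_neq0] := eqVneq x 0.
    have [t tq ->] := conic_point_surj xc x_neq0.
    by apply/orP; right; apply: imset_f.
  case/orP => [/eqP-> | /imsetP[t tq ->]]; last exact: conic_point_in.
  by rewrite inE expr0n mulr0 addr0 rpred0.
rewrite cardsU1 card_in_imset; last exact: conic_point_inj.
have -> : 0 \notin [set conic_point t | t in fixq].
  apply/imsetP => -[t tq /esym/eqP].
  by rewrite mulf_eq0 (negbTE (conic_scale_neq0 tq)) (negbTE (conic_dir_neq0 tq)).
by rewrite -card_fixq -cardsE.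
Qed.

End Conic.

Definition rho := (1 + theta) * (1 - theta ^+ q).

Lemma rho_conj : rho ^+ q = (1 + theta ^+ q) * (1 - theta).
Proof. by rewrite exprMn exprqD exprqB expr1n exprqK. Qed.

Lemma rho_neq0 : rho != 0.
Proof.
rewrite mulf_neq0 ?one_sub_thetaq_neq0 //.
by have := one_add_theta_neq0 (rpred1 _); rewrite mul1r.
Qed.

Section Unital.
Hypothesis q_odd : odd q.

Lemma two_neq0 : (2%:R : F) != 0.
Proof.
apply/eqP => two0; have two_pchar : 2 \in [pchar F] by rewrite inE /= two0 eqxx.
have /p_natP[k q_def] : (2%N).-nat q.
  by rewrite -(eq_pnat _ (pcharf_eq two_pchar)) pchar_nat_q.
by move: q_odd q_gt1; rewrite q_def oddX orbF => /eqP->.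
Qed.

Lemma four_neq0 : (4%:R : F) != 0.
Proof. by rewrite (natrM _ 2 2) mulf_neq0 ?two_neq0. Qed.

Lemma rho_ratio_notin_fixq : rho ^+ q / rho \isn't a fixq.
Proof.
apply/negP => /(fixq_conj_ratio rho_neq0)[] rq.
  have : 2%:R * (theta ^+ q - theta) = 0.
    transitivity (rho ^+ q - rho); last by rewrite rq subrr.
    by rewrite rho_conj /rho; ring.
  move/eqP; rewrite mulf_eq0 (negbTE two_neq0) subr_eq0 => /eqP thq.
  by case/negP: theta_notin_fixq; rewrite fixqE thq.
have : 2%:R * (theta ^+ q.+1 - 1) = 0.
  transitivity (- (rho ^+ q + rho)); last by rewrite rq addNr oppr0.
  by rewrite rho_conj /rho exprS; ring.
by apply/eqP; rewrite mulf_neq0 ?two_neq0 ?norm_theta_sub1_neq0.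
Qed.

Local Notation U := (U_theta q theta).
Local Notation sqr := (fun x : F => x ^+ 2).

Definition lineL (a b : F) : line F := inl (inl (a, b)).
Definition lineN (c : F) : line F := inl (inr c).
Definition chord (l : line F) : {set point F} := U :&: pts sqr l.

Lemma mem_U_aff x y : (aff x y \in U) = (y \in axis).
Proof.
rewrite inE; apply/existsP/axisP => [[t /andP[tq /eqP->]] | [t tq ->]].
  by exists t.
by exists t; rewrite eqxx andbT.
Qed.

Lemma pinfS_notin_U a : pinf (Some a) \notin U.
Proof. by rewrite inE. Qed.

Lemma mem_chordL x y a b :
  (aff x y \in chord (lineL a b)) = (y \in axis) && (y == (x + a) ^+ 2 - b).
Proof. by rewrite in_setI mem_U_aff in_set. Qed.

Lemma pinf_notin_chordL o a b : pinf o \notin chord (lineL a b).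
Proof. by case: o => [a'|]; rewrite !inE //= andbF. Qed.

Lemma mem_chordN x y c : (aff x y \in chord (lineN c)) = (y \in axis) && (x == c).
Proof. by rewrite in_setI mem_U_aff in_set. Qed.

Lemma pinf_in_chordN c : pinf None \in chord (lineN c).
Proof. by rewrite !inE. Qed.

Lemma card_chordN c : #|chord (lineN c)| = q.+1.
Proof.
have -> : chord (lineN c) = pinf None |: [set aff c (t * theta) | t in fixq].
  apply/setP => -[[x y] | [a |]]; rewrite in_setU1 /=.
  - rewrite -[inl _]/(aff x y) mem_chordN.
    apply/andP/imsetP => [[/axisP[t tq ->] /eqP->] | [t tq [-> ->]]]; first by exists t.
    by split=> //; apply/axisP; exists t.
  - by rewrite /chord !inE; apply/esym/imsetP => -[].
  - by rewrite pinf_in_chordN.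
rewrite cardsU1 card_imset; last by move=> t1 t2 [/(mulIf theta_neq0)].
have -> : pinf None \notin [set aff c (t * theta) | t in fixq] by apply/imsetP => -[].
by rewrite -card_fixq -cardsE.
Qed.

Lemma card_chordL a b : #|chord (lineL a b)| = #|[set x | (x + a) ^+ 2 - b \in axis]|.
Proof.
have -> : chord (lineL a b) =
    [set aff x ((x + a) ^+ 2 - b) | x in [set x | (x + a) ^+ 2 - b \in axis]].
  apply/setP => -[[x y] | o]; last first.
    by rewrite -[inr _]/(pinf o) (negbTE (pinf_notin_chordL _ _ _)); apply/esym/imsetP => -[].
  rewrite -[inl _]/(aff x y) mem_chordL; apply/andP/imsetP => [[ya /eqP y_def] | [x' + [-> ->]]].
    by exists x; rewrite ?inE -?y_def.
  by rewrite inE.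
by rewrite card_imset // => x1 x2 [].
Qed.

Lemma card_chordL_shift a b b' : b' - b \in axis ->
  #|chord (lineL a b')| = #|chord (lineL a b)|.
Proof.
move=> bb'; rewrite !card_chordL; apply: eq_card => x; rewrite !in_set.
have -> : (x + a) ^+ 2 - b' = (x + a) ^+ 2 - b - (b' - b) by ring.
by rewrite rpredBr.
Qed.

Definition parab (c y m : F) : line F := lineL (m / 2%:R - c) ((m / 2%:R) ^+ 2 - y).

Lemma mem_chord_parab x z c y m : (aff x z \in chord (parab c y m)) =
  (z \in axis) && (z == (x - c) ^+ 2 + m * (x - c) + y).
Proof.
rewrite mem_chordL; congr (_ && (z == _)).
by field; apply: two_neq0.
Qed.

Lemma card_chord_parab c y m : y \in axis -> m != 0 -> #|chord (parab c y m)| = q.+1.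
Proof.
move=> ya m_neq0.
have -> : chord (parab c y m) = [set aff (c + u) (u ^+ 2 + m * u + y) | u in conic m].
  apply/setP => -[[x z] | o]; last first.
    by rewrite -[inr _]/(pinf o) (negbTE (pinf_notin_chordL _ _ _)); apply/esym/imsetP => -[].
  rewrite -[inl _]/(aff x z) mem_chord_parab.
  apply/andP/imsetP => [[za /eqP z_def] | [u uc [-> ->]]].
    exists (x - c); last by rewrite [c + _]addrC subrK -z_def.
    by rewrite in_set -(rpredDr _ ya) -z_def.
  by rewrite in_set in uc; rewrite [c + u]addrC addrK (rpredDr _ ya) eqxx.
by rewrite card_imset ?card_conic // => u1 u2 [/addrI].
Qed.

Lemma block_chordN c : is_block sqr q U (chord (lineN c)).
Proof. by exists (lineN c); rewrite card_chordN. Qed.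

Lemma block_cases B : is_block sqr q U B ->
  (exists a b, B = chord (lineL a b) /\ #|chord (lineL a b)| = q.+1) \/
  exists c, B = chord (lineN c).
Proof.
case=> -[[[a b] | c] | []] [-> card_l]; [by left; exists a, b | by right; exists c |].
have chord_inf : U :&: pts sqr (inr tt) = [set pinf None].
  by apply/setP => -[[x y] | [a |]]; rewrite !inE /= ?andbF.
by move: card_l q_gt1; rewrite chord_inf cards1 => -[<-].
Qed.

Lemma block_pinf B : is_block sqr q U B -> pinf None \in B ->
  exists c, B = chord (lineN c).
Proof.
case/block_cases => [[a [b [-> _]]] | //].
by rewrite (negbTE (pinf_notin_chordL _ _ _)).
Qed.

Lemma meetsC (B C : {set point F}) : meets B C -> meets C B.
Proof. by rewrite /meets setIC. Qed.

Lemma meets_chordN_chordL d a b :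
  meets (chord (lineN d)) (chord (lineL a b)) <-> exists z, aff d z \in chord (lineL a b).
Proof.
split=> [/set0Pn[[[x z] | o]] | [z dz]].
- by rewrite in_setI -[inl _]/(aff x z) mem_chordN => /andP[/andP[_ /eqP->] dz]; exists z.
- by rewrite in_setI -[inr _]/(pinf o) (negbTE (pinf_notin_chordL _ _ _)) andbF.
apply/set0Pn; exists (aff d z); rewrite in_setI dz mem_chordN eqxx andbT.
by move: dz; rewrite mem_chordL => /andP[->].
Qed.

Lemma vertex_pinf : strong_II_vertex sqr q U (pinf None).
Proof.
split=> [|B C blockB infB blockC infC meetBC w wC w_neq wBC]; first by rewrite inE.
have [[a [b [B_def cardB]]] | [c' B_def]] := block_cases blockB; last first.
  by rewrite B_def pinf_in_chordN in infB.
have [c C_def] := block_pinf blockC infC; rewrite B_def C_def in meetBC wC *.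
have [y1 /[!mem_chordL] /andP[y1a /eqP y1_def]] :=
  (meets_chordN_chordL c a b).1 (meetsC meetBC).
case: w wC w_neq {wBC} => [[x yw] | [a' |]] //; last by rewrite /chord !inE.
rewrite -[inl _]/(aff x yw) mem_chordN => /andP[ywa /eqP->] _.
have shift z : (z - (y1 - yw) \in axis) = (z \in axis).
  by apply: rpredBr; apply: rpredB.
exists (chord (lineL a (b + (y1 - yw)))); split.
- exists (lineL a (b + (y1 - yw))); split => //.
  by rewrite (@card_chordL_shift a b) // addrC addKr rpredB.
- by apply/eqP => /setP/(_ (pinf None)); rewrite pinf_in_chordN (negbTE (pinf_notin_chordL _ _ _)).
- by rewrite mem_chordL ywa y1_def; apply/eqP; ring.
move=> D blockD infD meetDB.
have [d D_def] := block_pinf blockD infD; rewrite D_def in meetDB *.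
have [y2 /[!mem_chordL] /andP[y2a /eqP y2_def]] := (meets_chordN_chordL d a b).1 meetDB.
apply/meetsC/meets_chordN_chordL; exists (y2 - (y1 - yw)).
by rewrite mem_chordL shift y2a y2_def; apply/eqP; ring.
Qed.

Definition slope (u : F) := 2%:R + theta / u.

Lemma slope_secant e u u' : e ^+ 2 + slope u * e \in axis ->
  e ^+ 2 + slope u' * e \in axis -> e * (u^-1 - u'^-1) \is a fixq.
Proof.
move=> su su'; have := rpredB su su'; rewrite inE.
have -> : e ^+ 2 + slope u * e - (e ^+ 2 + slope u' * e) = e * (u^-1 - u'^-1) * theta.
  by rewrite /slope; ring.
by rewrite mulfK.
Qed.

Definition offset (eps : F) := 2%:R * (1 + eps * theta) / (theta ^+ q.+1 - 1).

Section Offset.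
Variable eps : F.
Hypotheses (eps_fixq : eps \is a fixq) (eps2 : eps ^+ 2 = 1).

Let sigma_neq0 := one_add_theta_neq0 eps_fixq.

Lemma offset_neq0 : offset eps != 0.
Proof. by rewrite !mulf_neq0 ?two_neq0 ?invr_eq0 ?norm_theta_sub1_neq0. Qed.

Lemma offset_in_conic : offset eps \in conic 2%:R.
Proof.
rewrite inE; apply/axisP.
exists (4%:R * eps * (1 + eps * theta) ^+ q.+1 / (theta ^+ q.+1 - 1) ^+ 2).
  apply: rpred_div; last by apply: rpredX; apply: rpredB (fixq_norm _) (rpred1 _).
  exact: rpredM (rpredM (rpred_nat _ 4) eps_fixq) (fixq_norm _).
have N1 : theta * theta ^+ q - 1 != 0 by rewrite -exprS norm_theta_sub1_neq0.
rewrite /offset !(exprS _ q) exprqD (exprMn _ _ _ : (eps * _) ^+ _ = _) expr1n (eqP eps_fixq).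
transitivity (4%:R * (1 + eps * theta) * ((1 + eps * theta) + theta * theta ^+ q - 1) /
  (theta * theta ^+ q - 1) ^+ 2); first by field.
have -> : (1 + eps * theta) + theta * theta ^+ q - 1 = eps * theta * (1 + eps * theta ^+ q).
  by transitivity (eps * theta + eps ^+ 2 * (theta * theta ^+ q)); [rewrite eps2; ring | ring].
by field.
Qed.

Lemma slope_offset_neq0 : slope (offset eps) != 0.
Proof.
apply/eqP => s0.
have : 4%:R + (4%:R * eps + theta ^+ q.+1 - 1) * theta = 0.
  transitivity (2%:R * (1 + eps * theta) * slope (offset eps)); last by rewrite s0 mulr0.
  by rewrite /slope /offset; field; rewrite two_neq0 sigma_neq0 norm_theta_sub1_neq0.
have coef_fixq : 4%:R * eps + theta ^+ q.+1 - 1 \is a fixq.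
  exact: rpredB (rpredD (rpredM (rpred_nat _ 4) eps_fixq) (fixq_norm _)) (rpred1 _).
by move/(fixq_theta_indep (rpred_nat _ 4) coef_fixq)/eqP; apply/negP/four_neq0.
Qed.

Lemma offset_inv_add_half : (offset eps)^-1 + 2%:R^-1 =
  eps * theta * (1 + eps * theta ^+ q) / (2%:R * (1 + eps * theta)).
Proof.
rewrite /offset invf_div (exprS theta q).
transitivity ((eps * theta + eps ^+ 2 * (theta * theta ^+ q)) / (2%:R * (1 + eps * theta))).
  by rewrite eps2; field; rewrite two_neq0 sigma_neq0.
by field; rewrite two_neq0 sigma_neq0.
Qed.

End Offset.

Lemma no_common_secant e : e != 0 ->
  ~ (forall u, u != 0 -> u \in conic 2%:R -> slope u != 0 ->
       e ^+ 2 + slope u * e \in axis).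
Proof.
move=> e_neq0 secant.
have u0_secant : e ^+ 2 + slope (- 2%:R) * e \in axis.
  apply: secant; rewrite ?oppr_eq0 ?two_neq0 //.
    by rewrite in_set (_ : (- 2%:R) ^+ 2 + 2%:R * - 2%:R = 0 :> F) ?rpred0 //; ring.
  rewrite /slope invrN mulrN subr_eq0; apply/eqP => /(congr1 (fun x => x * 2%:R)).
  rewrite divfK ?two_neq0 // => th4; case/negP: theta_notin_fixq.
  by rewrite -th4 rpredM ?rpred_nat.
have sec eps : eps \is a fixq -> eps ^+ 2 = 1 ->
    e * (eps * theta * (1 + eps * theta ^+ q) / (2%:R * (1 + eps * theta))) \is a fixq.
  move=> epsq eps2; rewrite -offset_inv_add_half // -[2%:R^-1]opprK -invrN.
  apply: slope_secant u0_secant; apply: secant.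
  - exact: offset_neq0.
  - exact: offset_in_conic.
  - exact: slope_offset_neq0.
have sqrN1 : (-1 : F) ^+ 2 = 1 by rewrite sqrrN expr1n.
have := rpred_div (sec 1 (rpred1 _) (expr1n _ _)) (sec (-1) (rpredN1 _) sqrN1).
rewrite !mul1r !mulN1r.
have -> : e * (theta * (1 + theta ^+ q) / (2%:R * (1 + theta))) /
    (e * (- theta * (1 - theta ^+ q) / (2%:R * (1 - theta)))) = - (rho ^+ q / rho).
  have s_pos := one_add_theta_neq0 (rpred1 _); rewrite mul1r in s_pos.
  have s_neg := one_add_theta_neq0 (rpredN1 _); rewrite mulN1r in s_neg.
  rewrite rho_conj /rho; field.
  by rewrite one_sub_thetaq_neq0 s_pos s_neg two_neq0 oppr_eq0 theta_neq0 e_neq0.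
by rewrite rpredN; apply/negP; apply: rho_ratio_notin_fixq.
Qed.

Lemma parab_slope_block c y u : y \in axis -> u != 0 -> u \in conic 2%:R ->
  slope u != 0 ->
  [/\ is_block sqr q U (chord (parab c y (slope u))),
      aff c y \in chord (parab c y (slope u)) &
      meets (chord (parab c y (slope u))) (chord (parab c (y + theta) 2%:R))].
Proof.
move=> ya u_neq0 uc su; split.
- by exists (parab c y (slope u)); rewrite card_chord_parab.
- by rewrite mem_chord_parab ya subrr expr2 mul0r mulr0 !add0r eqxx.
apply/set0Pn; exists (aff (c + u) (u ^+ 2 + 2%:R * u + (y + theta))).
have za : u ^+ 2 + 2%:R * u + (y + theta) \in axis.
  by apply: rpredD; [rewrite in_set in uc | apply: rpredD ya theta_in_axis].
rewrite in_setI !mem_chord_parab za [c + u]addrC addrK eqxx !andbT.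
by apply/eqP; rewrite /slope; field.
Qed.

Lemma not_vertex_aff c y : ~ strong_II_vertex sqr q U (aff c y).
Proof.
case; rewrite mem_U_aff => ya vertex.
have yta : y + theta \in axis by apply: rpredD ya theta_in_axis.
set B := chord (parab c (y + theta) 2%:R).
have blockB : is_block sqr q U B.
  by exists (parab c (y + theta) 2%:R); rewrite card_chord_parab ?two_neq0.
have vB : aff c y \notin B.
  rewrite mem_chord_parab subrr expr2 mul0r mulr0 !add0r.
  apply/negP => /andP[_ /eqP]; rewrite -{1}(addr0 y) => /addrI th0.
  by move: theta_neq0; rewrite -th0 eqxx.
have vC : aff c y \in chord (lineN c) by rewrite mem_chordN ya eqxx.
have meetBC : meets B (chord (lineN c)).
  apply/meetsC/meets_chordN_chordL; exists (y + theta).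
  by rewrite mem_chord_parab yta subrr expr2 mul0r mulr0 !add0r eqxx.
have infBC : pinf None \notin B :&: chord (lineN c).
  by rewrite in_setI (negbTE (pinf_notin_chordL _ _ _)).
have [B' [blockB' B'C infB' meetsB']] := vertex B _ blockB vB (block_chordN c) vC
  meetBC (pinf None) (pinf_in_chordN c) isT infBC.
have [d B'_def] := block_pinf blockB' infB'.
have e_neq0 : d - c != 0.
  by rewrite subr_eq0; apply: contraNneq B'C => dc; rewrite B'_def dc.
apply: (no_common_secant e_neq0) => u u_neq0 uc su.
have [blockD vD meetDB] := parab_slope_block c ya u_neq0 uc su.
have := meetsB' _ blockD vD meetDB; rewrite B'_def => /meets_chordN_chordL[z].
by rewrite mem_chord_parab => /andP[za /eqP z_def]; rewrite -(rpredDr _ ya) -z_def.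
Qed.

Lemma strong_II_vertexE v : strong_II_vertex sqr q U v <-> v = pinf None.
Proof.
split=> [|->]; last exact: vertex_pinf.
case: v => [[x y] | [a |]] // vertex; first by case: (not_vertex_aff vertex).
by case: vertex; rewrite (negbTE (pinfS_notin_U a)).
Qed.

End Unital.

End ThetaLine.
End FrobeniusFixedField.

Theorem theorem3p9 (q : nat) (F : finFieldType) (theta : F) :
  prime_power q -> odd q -> (3 < q)%N -> #|F| = (q ^ 2)%N ->
  theta != 0 ->
  ~ (exists s : F, s ^+ q = s /\ s ^+ 2 = theta ^+ q.+1) ->
  forall v : point F,
    strong_II_vertex (fun x : F => x ^+ 2) q (U_theta q theta) v
    <-> v = pinf None.
Proof.
move=> q_pp q_odd _ cardF theta_neq0 theta_nonsquare v.
exact: strong_II_vertexE.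
Qed.
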